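(* Let $R$ be an Artinian ring, with notation as in the context, and let $m,n\ge0$. For each $1\le k\le q$ let $S(k)\subset\{1,\dots,\mu_km\}$ be a subset with $\mu_kn$ elements. Then there exists an $R$-linear map $g\colon R^n\to R^m$ such that every column-adapted map $h\colon R^m\to R^n$ with $\mathfrak S(h,k)=S(k)$ for all $1\le k\le q$ satisfies $h\circ g=\mathrm{id}$.
   Context: Let $R$ be an Artinian ring, $J(R)$ its Jacobson radical, $\overline R=R/J(R)$, and $\bar x$ (resp. $\bar A$) the image of an element (resp. entrywise image of a matrix). $\overline R$ is semisimple, $\overline R\cong \mathrm{Mat}_{\mu_1}(\mathbb D_1)\times\cdots\times\mathrm{Mat}_{\mu_q}(\mathbb D_q)$ with division rings $\mathbb D_k$; put $\mu=\mu_1+\cdots+\mu_q$. Fix orthogonal idempotents $e^k_i\in R$ ($1\le k\le q$, $1\le i\le\mu_k$) with $\sum_{k,i}e^k_i=1$ lifting the orthogonal idempotents $\bar e^k_i$ of $\overline R$ given by the diagonal matrix units of this decomposition (so $e^k_iR\cong e^{k'}_{i'}R$ iff $k=k'$). Let $\mathbb L_{hk}=e^h_1Re^k_1$; then $\overline{\mathbb L_{kk}}=\mathbb D_k$ and $\overline{\mathbb L_{hk}}=0$ for $h\ne k$. The Peirce decomposition $R\cong\mathrm{End}(R_R)=\bigoplus\mathrm{Hom}(e^k_jR,e^h_iR)$, with the isomorphisms $e^h_iR\cong e^h_1R$, gives an injective ring homomorphism (the Artin–Wedderburn embedding) $\Phi\colon R\to\mathrm{Mat}_\mu(R)$, $x\mapsto(\Phi_{hk}(x))_{h,k=1}^q$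 a $q\times q$ block matrix with $\Phi_{hk}(x)\in\mathrm{Mat}_{\mu_h,\mu_k}(\mathbb L_{hk})$; its reduction $\overline\Phi\colon\overline R\to\mathrm{Mat}_\mu(\overline R)$ sends $\bar x$ to the block-diagonal matrix whose $k$-th block is the $\mathrm{Mat}_{\mu_k}(\mathbb D_k)$-component of $\bar x$. Vectors $R^n$ are columns (right $R$-modules); an $R$-linear $h\colon R^m\to R^n$ is an $n\times m$ matrix, and $\Phi(h)\in\mathrm{Mat}_{\mu n,\mu m}(R)$ is obtained by replacing each entry $x$ by $\Phi(x)$; similarly $\overline\Phi(\bar h)$. Distinguished basis: for $1\le k\le q$, $1\le a\le m$, $1\le r\le\mu_k$, let $\vec v(k)_{(a-1)\mu_k+r}$ be the standard basis vector of $R^{\mu m}$ of index $(a-1)\mu+\mu_1+\cdots+\mu_{k-1}+r$; define $\vec w(k)_i$ ($1\le i\le\mu_kn$) in $R^{\mu n}$ in the same way, bars denoting images in $\overline R^{\mu m},\overline R^{\mu n}$. For surjective $h$ and each $k$, $\mathfrak S(h,k)$ is the smallest, in the lexicographic order on increasingly sorted sequences, subset $S\subset\{1,\dots,\mu_km\}$ such that $\{\overline\Phi(\bar h)(\overline{\vec v(k)_j}):j\in S\}$ is a basis of the right $\mathbb D_k$-module $\bigoplus_{i=1}^{\mu_kn}\overline{\vec w(k)_i}\cdot\mathbb D_k$ (it has $\mu_kn$ elements). A surjective $R$-linear $h\colon R^m\to R^n$ is column-adapted if (i) for every $k$, writing $\mathfrak S(h,k)=\{j_1<\cdots<j_{\mu_kn}\}$,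 $\overline\Phi(\bar h)(\overline{\vec v(k)_{j_i}})=\overline{\vec w(k)_i}$ for all $i$, and (ii) $\Phi(h)(\vec v(k)_{j_i})=\vec w(k)_i$ for all $k$ and $1\le i\le\mu_kn$. *)

From HB Require Import structures.
From mathcomp Require Import all_boot all_order all_algebra.
Import GRing.Theory.
Set Implicit Arguments.
Unset Strict Implicit.
Unset Printing Implicit Defensive.
Local Open Scope ring_scope.

Definition rideal (R : pzRingType) (I : R -> Prop) : Prop :=
  [/\ I 0, (forall x y, I x -> I y -> I (x - y)) & (forall x r, I x -> I (x * r))].

Definition right_artinian (R : pzRingType) : Prop :=
  forall I : nat -> R -> Prop,
    (forall k, rideal (I k)) ->
    (forall k x, I k.+1 x -> I k x) ->
    exists N, forall k, (N <= k)%N -> forall x, I k x -> I N x.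

Definition maximal_rideal (R : pzRingType) (M : R -> Prop) : Prop :=
  [/\ rideal M, ~ M 1 &
      forall M' : R -> Prop, rideal M' -> (forall x, M x -> M' x) ->
        (forall x, M' x <-> M x) \/ M' 1].

Definition jacobson (R : pzRingType) (x : R) : Prop :=
  forall M : R -> Prop, maximal_rideal M -> M x.

Definition is_divring (D : unitRingType) : Prop :=
  forall x : D, x != 0 -> x \is a GRing.unit.

(* The fixed Artin-Wedderburn data of the context.                     *)
(*  - Rbar = R/J(R) is identified with prod_k Mat_{mu_k}(D_k) through  *)
(*    the ring morphisms aw_phi k (jointly surjective, kernel J(R));   *)
(*    mu_k = (aw_mu k).+1 >= 1, matrix index i is 0-based.             *)
(*  - aw_e k i : the idempotents e^k_i, lifting diagonal matrix units. *)
(*    A B = e^k_1, B A = e^k_i : the chosen isomorphisms              *)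
(*    e^k_i R ~ e^k_1 R (left multiplication by A, inverse by B).      *)
(*    They reduce to the matrix units E_{1i}, E_{i1} (this is the      *)
(*    compatibility making the reduction of Phi block diagonal).       *)

Unset Implicit Arguments.
Record AWdata (R : pzRingType) := {
  aw_q : nat;
  aw_mu : 'I_aw_q -> nat;
  aw_D : 'I_aw_q -> unitRingType;
  aw_D_div : forall k, is_divring (aw_D k);
  aw_phi : forall k, {rmorphism R -> 'M[aw_D k]_((aw_mu k).+1)};
  aw_phi_surj : forall a : forall k, 'M[aw_D k]_((aw_mu k).+1),
      exists x : R, forall k, aw_phi k x = a k;
  aw_phi_ker : forall x : R, (forall k, aw_phi k x = 0) <-> jacobson x;
  aw_e : forall k, 'I_(aw_mu k).+1 -> R;
  aw_e_idem : forall k i, aw_e k i * aw_e k i = aw_e k i;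
  aw_e_orth : forall k i k' i', (k != k') || (val i != val i') ->
      aw_e k i * aw_e k' i' = 0;
  aw_e_sum : \sum_(k < aw_q) \sum_(i < (aw_mu k).+1) aw_e k i = 1;
  aw_e_lift : forall k i, aw_phi k (aw_e k i) = delta_mx i i;
  aw_e_lift0 : forall k i k', k' != k -> aw_phi k' (aw_e k i) = 0;
  aw_A : forall k, 'I_(aw_mu k).+1 -> R;
  aw_B : forall k, 'I_(aw_mu k).+1 -> R;
  aw_A_in : forall k i, aw_e k ord0 * aw_A k i * aw_e k i = aw_A k i;
  aw_B_in : forall k i, aw_e k i * aw_B k i * aw_e k ord0 = aw_B k i;
  aw_AB : forall k i, aw_A k i * aw_B k i = aw_e k ord0;
  aw_BA : forall k i, aw_B k i * aw_A k i = aw_e k i;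
  aw_A_red : forall k i, aw_phi k (aw_A k i) = delta_mx ord0 i;
  aw_B_red : forall k i, aw_phi k (aw_B k i) = delta_mx i ord0
}.
Set Implicit Arguments.
Arguments aw_q {R}. Arguments aw_mu {R} _ _. Arguments aw_D {R} _ _.
Arguments aw_phi {R} _ _. Arguments aw_e {R} _ _ _.
Arguments aw_A {R} _ _ _. Arguments aw_B {R} _ _ _.

Unset Implicit Arguments.
Section Adapted.
Variables (R : pzRingType) (W : AWdata R).
Local Notation q := (aw_q W).
Local Notation mu k := (aw_mu W k).+1.
Local Notation D := (aw_D W).
Local Notation phi := (aw_phi W).
Local Notation e := (aw_e W).

(* Peirce / Artin-Wedderburn embedding, entry ((h,i),(k,j)) of Phi(x),
   an element of L_hk = e^h_1 R e^k_1. *)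
Definition PhiE (x : R) (h : 'I_q) (i : 'I_(mu h)) (k : 'I_q) (j : 'I_(mu k)) : R :=
  aw_A W h i * x * aw_B W k j.

(* 0-based index  j = a * s + r  of {0,..,m*s-1} <-> (a, r) *)
Lemma blk_proof (m s : nat) (j : 'I_(m * s.+1)) : (j %/ s.+1 < m)%N.
Proof. by rewrite ltn_divLR // ltn_ord. Qed.
Definition blk (m s : nat) (j : 'I_(m * s.+1)) : 'I_m := Ordinal (@blk_proof m s j).
Definition off (m s : nat) (j : 'I_(m * s.+1)) : 'I_s.+1 :=
  Ordinal (ltn_pmod j (ltn0Sn s)).
Arguments blk {m s} j.
Arguments off {m s} j.

(* vectors of R^{mu n}, indexed by positions (a, h, r) *)
Definition bigvec (n : nat) := forall (a : 'I_n) (h : 'I_q), 'I_(mu h) -> R.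

(* Phi(hm)(v(k)_j) for hm : R^m -> R^n *)
Definition Phi_col (n m : nat) (hm : 'M[R]_(n, m)) (k : 'I_q)
    (j : 'I_(m * mu k)) : bigvec n :=
  fun a h r => PhiE (hm a (blk j)) h r k (off j).

(* w(k)_i : the basis vector whose nonzero entry is the identity
   e^k_1 of L_kk, at position (blk i, k, off i) *)
Definition wvec (n : nat) (k : 'I_q) (i : 'I_(n * mu k)) : bigvec n :=
  fun a h r => if (h == k) && (a == blk i) && (val r == val (off i))
               then e k ord0 else 0.

(* z-bar lies in Lbar_kk (= D_k); its D_k-coordinate is (phi k z) 0 0 *)
Definition inLbar (k : 'I_q) (z : R) : Prop :=
  (forall k', k' != k -> phi k' z = 0) /\
  phi k z = (phi k z ord0 ord0) *: delta_mx ord0 ord0.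

(* y-bar lies in the right D_k-module  (+)_i wbar(k)_i D_k *)
Definition inMk (n : nat) (k : 'I_q) (y : bigvec n) : Prop :=
  forall a h r, if h == k then inLbar k (y a h r)
                else forall k', phi k' (y a h r) = 0.

Definition coordMk (n : nat) (k : 'I_q) (y : bigvec n) (p : 'I_(n * mu k)) : D k :=
  phi k (y (blk p) k (off p)) ord0 ord0.

(* {Phibar(hbar)(vbar(k)_j) : j in S} is a basis of the right
   D_k-module (+)_i wbar(k)_i D_k *)
Definition is_basis_set (n m : nat) (hm : 'M[R]_(n, m)) (k : 'I_q)
    (S : {set 'I_(m * mu k)}) : Prop :=
  [/\ forall j, j \in S -> inMk n k (Phi_col n m hm k j),
      forall x : 'I_(n * mu k) -> D k, exists lam : 'I_(m * mu k) -> D k,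
        forall p, \sum_(j in S) coordMk n k (Phi_col n m hm k j) p * lam j = x p &
      forall lam1 lam2 : 'I_(m * mu k) -> D k,
        (forall p, \sum_(j in S) coordMk n k (Phi_col n m hm k j) p * lam1 j
                 = \sum_(j in S) coordMk n k (Phi_col n m hm k j) p * lam2 j) ->
        forall j, j \in S -> lam1 j = lam2 j].

Definition sorted_set (N : nat) (S : {set 'I_N}) : seq nat :=
  sort leq [seq val x | x <- enum S].

Fixpoint lex_le (s t : seq nat) : bool :=
  match s, t with
  | [::], _ => true
  | _ :: _, [::] => false
  | x :: s', y :: t' => (x < y)%N || ((x == y) && lex_le s' t')
  end.

Definition is_frakS (n m : nat) (hm : 'M[R]_(n, m)) (k : 'I_q)
    (S : {set 'I_(m * mu k)}) : Prop :=
  is_basis_set n m hm k S /\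
  forall S', is_basis_set n m hm k S' -> lex_le (sorted_set _ S) (sorted_set _ S').

Definition surjective_mx (n m : nat) (hm : 'M[R]_(n, m)) : Prop :=
  forall y : 'cV[R]_n, exists x : 'cV[R]_m, hm *m x = y.

Definition column_adapted (n m : nat) (hm : 'M[R]_(n, m)) : Prop :=
  surjective_mx n m hm /\
  forall (k : 'I_q) (S : {set 'I_(m * mu k)}), is_frakS n m hm k S ->
  forall (i : 'I_(n * mu k)) (j : 'I_(m * mu k)),
    val j = nth 0%N (sorted_set _ S) i ->
    (forall a h r k', phi k' (Phi_col n m hm k j a h r) = phi k' (wvec n k i a h r)) /\
    (forall a h r, Phi_col n m hm k j a h r = wvec n k i a h r).

End Adapted.

From HB Require Import structures.
From mathcomp Require Import all_boot all_order all_algebra.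
From mathcomp Require Import zify.
Import GRing.Theory.

(* Let A^k_r, B^k_r be the elements implementing e^k_r R ~ e^k_1 R, so that
   B^k_r A^k_r = e^k_r.  Summing e^k_r = B^k_r A^k_r over all (k, r) shows
   x B^k_s = sum_(k', r) B^k'_r Phi(x)_((k', r), (k, s)) for every x.  Hence
   condition (ii), Phi(h) v(k)_(j_i) = w(k)_i, says that column b of h, where
   j_i = (b, s), satisfies h_(a b) B^k_s = [a = c] B^k_r when i = (c, r).
   Taking g_(b c) = sum B^k_s A^k_r over the (k, i) with i = (c, r) and
   j_i = (b, s) therefore gives (h g)_(a c) = [a = c] sum_(k, r) e^k_r, the
   identity matrix.  Only the positions j_i, fixed by S(k), enter g. *)

Set Implicit Arguments.
Unset Strict Implicit.
Unset Printing Implicit Defensive.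
Local Open Scope ring_scope.

Lemma blk_off_subproof n s (a : 'I_n) (r : 'I_s.+1) :
  (a * s.+1 + r < n * s.+1)%N.
Proof. by have := ltn_ord a; have := ltn_ord r; nia. Qed.

Lemma big_blk (V : nmodType) n s (a : 'I_n) (F : 'I_s.+1 -> V) :
  \sum_(i < n * s.+1 | blk n s i == a) F (off n s i) = \sum_(r < s.+1) F r.
Proof.
pose pos (r : 'I_s.+1) : 'I_(n * s.+1) := Ordinal (blk_off_subproof a r).
have off_pos r : off n s (pos r) = r.
  by apply: val_inj; rewrite /= modnMDl modn_small.
rewrite (reindex_onto pos (off n s)) => [|i /eqP blk_i]; last first.
  by apply: val_inj; rewrite /= -blk_i /= -divn_eq.
apply: eq_big => r; last by rewrite off_pos.
rewrite off_pos eqxx andbT; apply/eqP/val_inj.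
by rewrite /= divnMDl // divn_small // addn0.
Qed.

Lemma sorted_set_enum N (S : {set 'I_N}) :
  sorted_set N S = [seq val j | j <- enum S].
Proof.
apply: sorted_sort; first exact: leq_trans.
rewrite /enum_mem -enumT sorted_map.
apply: sorted_filter => [i j k|]; first exact: leq_trans.
by rewrite -sorted_map val_enum_ord iota_sorted.
Qed.

Lemma nth_sorted_set N (S : {set 'I_N}) (i : 'I_#|S|) :
  nth 0%N (sorted_set N S) i = enum_val i.
Proof. by rewrite sorted_set_enum; apply: nth_image. Qed.

Section ColumnInverse.
Variables (R : pzRingType) (W : AWdata R).
Local Notation q := (aw_q W).
Local Notation mu k := (aw_mu W k).+1.
Local Notation e := (aw_e W).
Local Notation A := (aw_A W).
Local Notation B := (aw_B W).

Lemma aw_B_e0 k r : B k r * e k ord0 = B k r.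
Proof. by rewrite -(aw_B_in _ W) -!mulrA (aw_e_idem _ W). Qed.

Lemma aw_mulB_PhiE x k s :
  x * B k s = \sum_(k' < q) \sum_(r < mu k') B k' r * PhiE R W x k' r k s.
Proof.
rewrite -[LHS]mul1r -(aw_e_sum _ W) mulr_suml; apply: eq_bigr => k' _.
by rewrite mulr_suml; apply: eq_bigr => r _; rewrite -(aw_BA _ W) /PhiE !mulrA.
Qed.

Lemma sum_B_wvec n k (i : 'I_(n * mu k)) a :
  \sum_(k' < q) \sum_(r < mu k') B k' r * wvec R W n k i a k' r
  = if a == blk n _ i then B k (off n _ i) else 0.
Proof.
rewrite (bigD1 k) //= [X in _ + X]big1 ?addr0; last first.
  by move=> k' /negbTE k'k; apply: big1 => r _; rewrite /wvec k'k mulr0.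
have [->|/negbTE ai] := eqVneq a; last first.
  by apply: big1 => r _; rewrite /wvec ai andbF mulr0.
rewrite (bigD1 (off n _ i)) //= [X in _ + X]big1 ?addr0.
  by rewrite /wvec !eqxx aw_B_e0.
by move=> r /negbTE ri; rewrite /wvec !eqxx val_eqE ri mulr0.
Qed.

Lemma Phi_col_wvec_mulB n m (h : 'M[R]_(n, m)) k (i : 'I_(n * mu k))
    (j : 'I_(m * mu k)) a :
  (forall a' k' r, Phi_col R W n m h k j a' k' r = wvec R W n k i a' k' r) ->
  h a (blk m _ j) * B k (off m _ j)
  = if a == blk n _ i then B k (off n _ i) else 0.
Proof.
move=> hj; rewrite aw_mulB_PhiE -sum_B_wvec.
by apply: eq_bigr => k' _; apply: eq_bigr => r _; rewrite -hj.
Qed.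

(* When every sigma k is injective, Phi maps this matrix to the one sending
   w(k)_i to v(k)_(sigma k i). *)
Definition col_inverse m n (sigma : forall k, 'I_(n * mu k) -> 'I_(m * mu k)) :
    'M[R]_(m, n) :=
  \matrix_(b, c) \sum_(k < q) \sum_(i | blk n _ i == c)
    (if blk m _ (sigma k i) == b then B k (off m _ (sigma k i)) * A k (off n _ i)
     else 0).

Lemma mul_col_inverse m n (h : 'M[R]_(n, m)) sigma :
  (forall k i a k' r,
     Phi_col R W n m h k (sigma k i) a k' r = wvec R W n k i a k' r) ->
  h *m col_inverse sigma = 1%:M.
Proof.
move=> hsigma; apply/matrixP => a c; rewrite !mxE.
have -> : \sum_b h a b * col_inverse sigma b c
    = \sum_(k < q) \sum_(i | blk n _ i == c)
        h a (blk m _ (sigma k i)) * B k (off m _ (sigma k i)) * A k (off n _ i).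
  under eq_bigr => b _ do rewrite mxE big_distrr.
  rewrite exchange_big; apply: eq_bigr => k _.
  under eq_bigr => b _ do rewrite big_distrr.
  rewrite exchange_big; apply: eq_bigr => i _ /=.
  rewrite (bigD1 (blk m _ (sigma k i))) //= eqxx mulrA big1 ?addr0 // => b bi.
  by rewrite eq_sym (negbTE bi) mulr0.
under eq_bigr => k _ do
  under eq_bigr => i _ do rewrite (Phi_col_wvec_mulB a (hsigma k i)).
have [<-|/negbTE ac] := eqVneq a c; last first.
  rewrite mulr0n; apply: big1 => k _.
  by apply: big1 => i /eqP ->; rewrite ac mul0r.
rewrite mulr1n -(aw_e_sum _ W); apply: eq_bigr => k _.
by rewrite -(big_blk a); apply: eq_bigr => i /eqP ->; rewrite eqxx (aw_BA _ W).
Qed.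

End ColumnInverse.

Theorem lemma4p4 (R : pzRingType) (HR : right_artinian R) (W : AWdata R)
  (m n : nat) (S : forall k : 'I_(aw_q W), {set 'I_(m * (aw_mu W k).+1)})
  (HS : forall k, #|S k| = (n * (aw_mu W k).+1)%N) :
  exists g : 'M[R]_(m, n),
    forall h : 'M[R]_(n, m),
      column_adapted R W n m h ->
      (forall k, is_frakS R W n m h k (S k)) ->
      h *m g = 1%:M.
Proof.
pose sigma k i := enum_val (cast_ord (esym (HS k)) i) : 'I_(m * (aw_mu W k).+1).
exists (col_inverse sigma) => h [_ adapted] frakS.
apply: mul_col_inverse => k i a k' r.
have [|_ -> //] := adapted k (S k) (frakS k) i (sigma k i).
by rewrite -[val i]/(val (cast_ord (esym (HS k)) i)) nth_sorted_set.
Qed.
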